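(* Let $\Phi(k)=24182784k^5-927166375k^4+274015368k^3+10740240k^2-318470912k-47232000$. Let $\alpha$ be any real root of $\Phi$ in the interval $(-0.55,-0.54)$ (such a root exists), let $s$ be a real number with $$s^2=\frac{36(4\alpha+5)}{1025\alpha(5\alpha-4)},$$ and set $c=\frac{32(4\alpha+5)}{205(5\alpha-4)}$, $f=-\frac{5(4\alpha+5)}{41}s$, $$C_\alpha=\begin{bmatrix}0&\frac12&s&c&0\\0&0&\frac12&f&-\frac54c\\0&0&0&\frac12&\alpha s\\0&0&0&0&\frac25\\0&0&0&0&0\end{bmatrix}.$$ Then $C_\alpha$ is a contraction, $Q_{C_\alpha}(x,y)\in\mathbb{C}[xy]$ and $P_{C_\alpha}(x,y)\notin\mathbb{C}[xy]$. Consequently $\mathcal{A}(C_\alpha)$ has the Circularity property while $C_\alpha$ does not.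
   Context: A contraction is a matrix with $\|C\|\le1$. $P_C(x,y)=\det(I-xC-yC^* )$, $Q_C(x,y)=\det(I-xC-yC^*-xy(I-C^*C))$; $\mathbb{C}[xy]$ is the set of polynomials in the product $xy$ alone. $H_X(\theta)=\frac12(e^{-i\theta}X+e^{i\theta}X^* )$; $X$ has the Circularity property if the spectrum of $H_X(\theta)$ is independent of $\theta$. For a contraction $C\in M_n$: $D_C=I-C^*C$, $d=\operatorname{rank}D_C$, $B_C$ is a $d\times n$ matrix of full row rank with $B_C^*B_C=D_C$, and $\mathcal{A}(C)=\begin{bmatrix}0&B_C\\0&C\end{bmatrix}$. *)

From HB Require Import structures.
From mathcomp Require Import all_boot all_order all_algebra.
From mathcomp Require Import complex.
From mathcomp Require Import reals trigo.
Set Implicit Arguments. Unset Strict Implicit. Unset Printing Implicit Defensive.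
Import Order.TTheory GRing.Theory Num.Theory.
Local Open Scope ring_scope.
Local Open Scope complex_scope.

Section Defs.
Variable R : realType.
Local Notation C := R[i].

Definition adjmx m n (X : 'M[C]_(m, n)) : 'M[C]_(n, m) := (map_mx conjc X)^T.

Definition sqnorm n (v : 'cV[C]_n) : C := \sum_i `|v i 0| ^+ 2.

Definition contraction n (X : 'M[C]_n) : Prop :=
  forall v : 'cV[C]_n, sqnorm (X *m v) <= sqnorm v.

Definition P_poly n (X : 'M[C]_n) (x y : C) : C :=
  \det (1%:M - x *: X - y *: adjmx X).

Definition Q_poly n (X : 'M[C]_n) (x y : C) : C :=
  \det (1%:M - x *: X - y *: adjmx X - (x * y) *: (1%:M - adjmx X *m X)).

Definition in_Cxy (F : C -> C -> C) : Prop :=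
  exists q : {poly C}, forall x y : C, F x y = q.[x * y].

Definition expi (t : R) : C := (cos t) +i* (sin t).

Definition Hmx n (X : 'M[C]_n) (t : R) : 'M[C]_n :=
  2^-1 *: (expi (- t) *: X + expi t *: adjmx X).

(* spectrum (eigenvalues counted with multiplicity, i.e. the characteristic
   polynomial) of H_X(theta) independent of theta *)
Definition Circularity n (X : 'M[C]_n) : Prop :=
  forall t1 t2 : R, char_poly (Hmx X t1) = char_poly (Hmx X t2).

Definition DC n (X : 'M[C]_n) : 'M[C]_n := 1%:M - adjmx X *m X.

Definition Amx d n (B : 'M[C]_(d, n)) (X : 'M[C]_n) : 'M[C]_(d + n) :=
  block_mx 0 B 0 X.

(* n3 a b c = the decimal number "a b c" in groups of three digits,
   i.e. a * 10^6 + b * 10^3 + c (avoids huge unary nat literals) *)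
Definition n3 (a b c : nat) : R := (a%:R * 1000 + b%:R) * 1000 + c%:R.

Definition Phi (k : R) : R :=
  n3 24 182 784 * k ^+ 5 - n3 927 166 375 * k ^+ 4 + n3 274 15 368 * k ^+ 3
  + n3 10 740 240 * k ^+ 2 - n3 318 470 912 * k - n3 47 232 0.

Definition cc (a : R) : R := 32 * (4 * a + 5) / (205 * (5 * a - 4)).
Definition ff (a s : R) : R := - (5 * (4 * a + 5) / 41) * s.

Definition Cmx_real (a s : R) : 'M[R]_5 :=
  \matrix_(i < 5, j < 5)
    match nat_of_ord i, nat_of_ord j with
    | 0, 1 => 2^-1 | 0, 2 => s | 0, 3 => cc a
    | 1, 2 => 2^-1 | 1, 3 => ff a s | 1, 4 => - (5 / 4) * cc a
    | 2, 3 => 2^-1 | 2, 4 => a * s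
    | 3, 4 => 2 / 5
    | _, _ => 0
    end.

Definition Calpha (a s : R) : 'M[C]_5 := map_mx (fun r => r%:C) (Cmx_real a s).

End Defs.

(* C_alpha is real, so P_C and Q_C are determinants of explicit 5 x 5 matrices
   whose entries are polynomial in x, y and in the parameters a = alpha, s and
   c = cc a; we expand them symbolically.  In Q_C the coefficients of the mixed
   monomials x^i y^j + x^j y^i (i <> j) vanish once c and s^2 are substituted
   and Phi(a) = 0, so Q_C(x, y) = Q_C(xy, 1).  In P_C the coefficient of
   x^2 y^3 + x^3 y^2 is s times a cubic in a that is negative on the interval,
   hence P_C(-i, i) <> P_C(1, 1).
   The spectrum of H_X(t) is encoded by
   det (z - H_X(t)) = z^n P_X(e^{-it} / 2z, e^{it} / 2z).  For A(C) the Schur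
   complement of the zero block, together with B^* B = D_C, turns this into a
   value of Q_C at a point whose coordinates have product (2z)^{-2},
   independent of t; so A(C) has the Circularity property.  Comparing t = 0
   with t = pi/2 at z = 1/2 shows that C does not.  Finally, C_alpha is a
   contraction because its Frobenius norm is below 1. *)

From HB Require Import structures.
From mathcomp Require Import all_boot all_order all_algebra.
From mathcomp Require Import complex.
From mathcomp Require Import reals trigo.
From mathcomp Require Import sesquilinear spectral ring lra.
Import Order.TTheory GRing.Theory Num.Theory.
Local Open Scope ring_scope.
Set Implicit Arguments. Unset Strict Implicit. Unset Printing Implicit Defensive.

Lemma horner_det (F : comNzRingType) n (A : 'M[{poly F}]_n) z :
  (\det A).[z] = \det (map_mx (horner^~ z) A).
Proof. by rewrite -horner_evalE -det_map_mx. Qed.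

Lemma horner_char_poly (F : comNzRingType) n (M : 'M[F]_n) z :
  (char_poly M).[z] = \det (z%:M - M).
Proof.
rewrite horner_det; congr determinant; apply/matrixP => i j.
by rewrite !mxE !hornerE hornerMn hornerX.
Qed.

Lemma eq_poly_on_nonzero (F : numDomainType) (p q : {poly F}) :
  (forall z, z != 0 -> p.[z] = q.[z]) -> p = q.
Proof.
move=> pq; apply/eqP; rewrite -subr_eq0; apply/negP => /negP pq0.
pose zs := [seq k.+1%:R : F | k <- iota 0 (size (p - q))].
have roots_pq : all (root (p - q)) zs.
  apply/allP => _ /mapP [k _ ->].
  by rewrite /root hornerD hornerN pq ?subrr ?pnatr_eq0.
have uniq_zs : uniq zs.
  by rewrite map_inj_uniq ?iota_uniq // => k l /eqP; rewrite eqr_nat => /eqP [].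
by have := max_poly_roots pq0 roots_pq uniq_zs; rewrite size_map size_iota ltnn.
Qed.

Lemma det_scalar_block (F : comNzRingType) d n (z : F) (U : 'M_(d, n)) V W :
  \det (block_mx (z%:M : 'M_d) U V W) * z ^+ n = z ^+ d * \det (z *: W - V *m U).
Proof.
have := det_mulmx (block_mx (z%:M : 'M_d) U V W) (block_mx 1%:M (- U) 0 z%:M).
rewrite det_ublock det1 det_scalar mul1r mulmx_block => <-.
rewrite !mulmx1 !mulmx0 !addr0 mul_scalar_mx mul_mx_scalar scalerN addNr.
by rewrite det_lblock det_scalar mulmxN addrC mul_mx_scalar.
Qed.

Section LaplaceExpansion.
Variable F : comNzRingType.

(* Laplace expansion along the first row, as a Fixpoint: for an explicit size
   it unfolds by simplification into a polynomial expression in the entries. *)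
Fixpoint sum_upto (m : nat) (g : nat -> F) : F :=
  if m is m'.+1 then sum_upto m' g + g m' else 0.

Fixpoint det_laplace (n : nat) (e : nat -> nat -> F) : F :=
  if n is n'.+1 then
    sum_upto n (fun j =>
      (-1) ^+ j * e 0%N j * det_laplace n' (fun i k => e i.+1 (bump j k)))
  else 1.

Lemma sum_uptoE m g : sum_upto m g = \sum_(j < m) g j.
Proof. by elim: m => [|m IHm]; rewrite ?big_ord0 // big_ord_recr /= IHm. Qed.

Lemma det_laplaceS n (e : nat -> nat -> F) : det_laplace n.+1 e =
  \sum_(j < n.+1) (-1) ^+ j * e 0%N j * det_laplace n (fun i k => e i.+1 (bump j k)).
Proof. exact: sum_uptoE. Qed.

Lemma det_laplaceE n (e : nat -> nat -> F) :
  \det (\matrix_(i < n, j < n) e i j) = det_laplace n e.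
Proof.
elim: n e => [|n IHn] e; first by rewrite det_mx00.
rewrite (expand_det_row _ ord0) det_laplaceS; apply: eq_bigr => j _.
rewrite /cofactor !mxE add0n mulrCA mulrA -IHn; congr (_ * \det _).
by apply/matrixP => i k; rewrite !mxE.
Qed.

Definition P_entries (e : nat -> nat -> F) x y i j : F :=
  (i == j)%:R - x * e i j - y * e j i.

Definition Q_entries n (e : nat -> nat -> F) x y i j : F :=
  P_entries e x y i j - x * y * ((i == j)%:R - sum_upto n (fun k => e k i * e k j)).

Lemma P_matrixE n (e : nat -> nat -> F) x y (E := \matrix_(i < n, j < n) e i j) :
  1%:M - x *: E - y *: E^T = \matrix_(i < n, j < n) P_entries e x y i j.
Proof. by apply/matrixP => i j; rewrite !mxE. Qed.

Lemma Q_matrixE n (e : nat -> nat -> F) x y (E := \matrix_(i < n, j < n) e i j) :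
  1%:M - x *: E - y *: E^T - (x * y) *: (1%:M - E^T *m E) =
  \matrix_(i < n, j < n) Q_entries n e x y i j.
Proof.
apply/matrixP => i j; rewrite !mxE /Q_entries /P_entries sum_uptoE.
congr (_ - _ * (_ - _)).
by apply: eq_bigr => k _; rewrite !mxE.
Qed.

End LaplaceExpansion.

Section ComplexMatrices.
Variable R : realType.
Local Notation C := R[i].
Local Open Scope complex_scope.

Lemma adjmx_map_real m n (M : 'M[R]_(m, n)) :
  adjmx (map_mx (fun r => r%:C) M) = (map_mx (fun r => r%:C) M)^T.
Proof. by congr (_^T); apply/matrixP => i j; rewrite !mxE conjc_real. Qed.

Definition frobenius2 m n (X : 'M[C]_(m, n)) : C := \sum_i \sum_j `|X i j| ^+ 2.

Lemma sqnorm_ge0 n (v : 'cV[C]_n) : 0 <= sqnorm v.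
Proof. by apply: sumr_ge0 => i _; rewrite exprn_ge0. Qed.

Lemma sqnorm_mulmx_le m n (X : 'M[C]_(m, n)) (v : 'cV[C]_n) :
  sqnorm (X *m v) <= frobenius2 X * sqnorm v.
Proof.
have dotE (u w : 'rV[C]_n) : dotmx u w = \sum_k u 0 k * (w 0 k)^*.
  by rewrite dotmxE !mxE; apply: eq_bigr => k _; rewrite !mxE.
have dnormE (u : 'rV[C]_n) : dotmx u u = \sum_k `|u 0 k| ^+ 2.
  by rewrite dotE; apply: eq_bigr => k _; rewrite normCK.
rewrite /sqnorm /frobenius2 mulr_suml; apply: ler_sum => i _.
have -> : (X *m v) i 0 = dotmx (row i X) (map_mx Num.conj v)^T.
  by rewrite dotE !mxE; apply: eq_bigr => k _; rewrite !mxE conjCK.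
have := (CauchySchwarz (@dotmx C n) (row i X) (map_mx Num.conj v)^T).1.
rewrite /= !dnormE; congr (_ <= _ * _); apply: eq_bigr => k _; rewrite !mxE //.
by rewrite norm_conjC.
Qed.

Lemma contraction_frobenius n (X : 'M[C]_n) : frobenius2 X <= 1 -> contraction X.
Proof.
move=> X1 v; apply: (le_trans (sqnorm_mulmx_le X v)).
by rewrite -[leRHS]mul1r ler_wpM2r // sqnorm_ge0.
Qed.

Lemma frobenius2_map_real m n (M : 'M[R]_(m, n)) :
  frobenius2 (map_mx (fun r => r%:C) M) = (\sum_i \sum_j M i j ^+ 2)%:C.
Proof.
rewrite rmorph_sum; apply: eq_bigr => i _; rewrite rmorph_sum; apply: eq_bigr => j _.
by rewrite mxE -add_Re2_Im2 /= expr0n addr0.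
Qed.

Lemma expi_mul_expiN (t : R) : expi (- t) * expi t = 1 :> C.
Proof.
rewrite /expi cosN sinN; apply/eqP; rewrite eq_complex /=; apply/andP; split.
  by rewrite -(cos2Dsin2 t); apply/eqP; ring.
by apply/eqP; ring.
Qed.

Lemma expi_neq0 (t : R) : expi t != 0 :> C.
Proof.
by apply/eqP => t0; move/eqP: (expi_mul_expiN t); rewrite t0 mulr0 eq_sym oner_eq0.
Qed.

Lemma expiN_pihalf : expi (- (pi / 2)) = - 'i :> C.
Proof.
rewrite /expi cosN sinN cos_pihalf sin_pihalf.
by apply/eqP; rewrite eq_complex /= oppr0 !eqxx.
Qed.

Lemma expi_pihalf : expi (pi / 2) = 'i :> C.
Proof. by rewrite /expi cos_pihalf sin_pihalf. Qed.

Lemma expi0 : expi 0 = 1 :> C.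
Proof. by rewrite /expi cos0 sin0. Qed.

Lemma det_half_sub_Hmx n (X : 'M[C]_n) t :
  \det (2^-1%:M - Hmx X t) = 2^-1 ^+ n * P_poly X (expi (- t)) (expi t).
Proof.
rewrite /P_poly -detZ; congr determinant; apply/matrixP => i j; rewrite !mxE.
by case: (i == j); rewrite /= ?mulr1n ?mulr0n; field.
Qed.

Lemma Circularity_P_poly n (X : 'M[C]_n) t1 t2 : Circularity X ->
  P_poly X (expi (- t1)) (expi t1) = P_poly X (expi (- t2)) (expi t2).
Proof.
have half_neq0 : 2^-1 != 0 :> C by rewrite invr_eq0 pnatr_eq0.
move=> circX; apply: (mulfI (expf_neq0 n half_neq0)).
(* Rewriting with these equations is very slow, because the instances of R[i]
   in their statements and in Circularity differ; chaining them is immediate. *)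
apply: etrans (esym (det_half_sub_Hmx X t1)) _; apply: etrans (det_half_sub_Hmx X t2).
exact: etrans (esym (horner_char_poly _ _))
  (etrans (congr1 (horner^~ 2^-1) (circX t1 t2)) (horner_char_poly _ _)).
Qed.

Lemma in_Cxy_Q_poly n (X : 'M[C]_n) :
  (forall x y, Q_poly X x y = Q_poly X (x * y) 1) -> in_Cxy (Q_poly X).
Proof.
move=> QE; exists (\det (map_mx polyC (1%:M - adjmx X) - 'X *: map_mx polyC (X + DC X))).
move=> x y; rewrite QE horner_det /Q_poly; congr determinant.
apply/matrixP => i j.
by rewrite !mxE !(hornerD, hornerN, hornerM, hornerC, hornerX); ring.
Qed.

Lemma adjmx_Amx d n (B : 'M[C]_(d, n)) (X : 'M[C]_n) :
  adjmx (Amx B X) = block_mx 0 0 (adjmx B) (adjmx X).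
Proof.
rewrite /adjmx /Amx map_block_mx tr_block_mx; congr block_mx;
  by apply/matrixP => i j; rewrite !mxE ?conjc0.
Qed.

Lemma Hmx_Amx d n (B : 'M[C]_(d, n)) (X : 'M[C]_n) t :
  Hmx (Amx B X) t =
  block_mx 0 ((2^-1 * expi (- t)) *: B) ((2^-1 * expi t) *: adjmx B) (Hmx X t).
Proof.
rewrite /Hmx adjmx_Amx /Amx !scale_block_mx add_block_mx scale_block_mx.
by rewrite !scaler0 !addr0 !add0r !scalerA scaler0.
Qed.

(* Schur complement of the zero d x d block; B^* B = D_X turns it into the
   pencil defining Q_X. *)
Lemma det_sub_Hmx_Amx d n (B : 'M[C]_(d, n)) (X : 'M[C]_n) t (z : C) :
  z != 0 -> adjmx B *m B = DC X ->
  \det (z%:M - Hmx (Amx B X) t) * z ^+ n =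
  z ^+ d * ((z ^+ 2) ^+ n * Q_poly X (expi (- t) / (2 * z)) (expi t / (2 * z))).
Proof.
move=> z0 BB; rewrite Hmx_Amx (scalar_mx_block d n z) opp_block_mx add_block_mx.
rewrite oppr0 addr0 !add0r det_scalar_block; congr (_ * _).
rewrite /Q_poly -detZ; congr determinant.
rewrite mulNmx mulmxN opprK -scalemxAl -scalemxAr BB scalerA -/(DC X) /Hmx.
move: (DC X) => D.
have expiN : expi t = (expi (- t))^-1.
  by apply: (mulfI (expi_neq0 (- t))); rewrite expi_mul_expiN mulfV ?expi_neq0.
have := expi_neq0 (- t); rewrite expiN; move: (expi (- t)) => w w0.
apply/matrixP => i j; rewrite !mxE.
by case: (i == j); rewrite /= ?mulr1n ?mulr0n; field; rewrite z0 w0.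
Qed.

Lemma Circularity_Amx d n (B : 'M[C]_(d, n)) (X : 'M[C]_n) :
  in_Cxy (Q_poly X) -> adjmx B *m B = DC X -> Circularity (Amx B X).
Proof.
move=> [q Qq] BB t1 t2; apply: eq_poly_on_nonzero => z z0.
apply: (mulIf (expf_neq0 n z0)).
have prodE t : expi (- t) / (2 * z) * (expi t / (2 * z)) = (2 * z)^-1 * (2 * z)^-1.
  by rewrite mulf_div expi_mul_expiN mul1r invfM.
apply: etrans (congr1 (fun w => w * _) (horner_char_poly _ _)) _.
apply: etrans (det_sub_Hmx_Amx t1 z0 BB) _; apply: esym.
apply: etrans (congr1 (fun w => w * _) (horner_char_poly _ _)) _.
apply: etrans (det_sub_Hmx_Amx t2 z0 BB) _.
by rewrite !Qq !prodE.
Qed.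

End ComplexMatrices.

Section CalphaSymbolic.
Variable F : numFieldType.
Implicit Types a s c x y : F.

(* The entries of C_alpha, with c = cc a kept as an independent parameter. *)
Definition Centry a s c (i j : nat) : F :=
  match i, j with
  | 0, 1 => 2^-1 | 0, 2 => s | 0, 3 => c
  | 1, 2 => 2^-1 | 1, 3 => - (5 * (4 * a + 5) / 41) * s | 1, 4 => - (5 / 4) * c
  | 2, 3 => 2^-1 | 2, 4 => a * s
  | 3, 4 => 2 / 5
  | _, _ => 0
  end.

(* Coefficients of the monomials x^i y^j + x^j y^i in the expansions of Q and P
   for the matrix Centry a s c, as found by computer algebra; det_Q_Centry and
   det_P_Centry below certify them.  Numerals beyond 10^4 are written
   k * 1000 + r since nat literals are unary. *)
Definition Qcoef23 a s c : F :=
  s * (- 4 / 41 - 1 / 2 * c - 16 / 205 * a + 5 / 8 * a * c).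
Definition Qcoef34 a s c : F :=
  s * (8 / 41 + 1043 / 1025 * c + 32 / 205 * a - 1595 / 1312 * a * c
       - 16 / 205 * a * s ^+ 2 - 25 / 164 * a ^+ 2 * s ^+ 2).
Definition Qcoef35 a s c : F := 9 / 800 * c - 1 / 20 * a * s ^+ 2.
Definition Qcoef45 a s c : F :=
  s * (- 63 / 1025 - 3219 / 8200 * c + 1 / 4 * c ^+ 2 + 25 / 32 * c ^+ 3
       + 25 / 82 * s ^+ 2 * c - 117 / 3280 * a + 3219 / 6560 * a * c
       + 5 / 16 * a * c ^+ 2 - 5 / 8 * a * c ^+ 3 + 1 / 5 * a * s ^+ 2
       + 10 / 41 * a * s ^+ 2 * c - 125 / 164 * a * s ^+ 2 * c ^+ 2
       + 1 / 4 * a ^+ 2 * s ^+ 2 - 25 / 82 * a ^+ 2 * s ^+ 2 * c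
       - 25 / 41 * a ^+ 2 * s ^+ 2 * c ^+ 2 - 10 / 41 * a ^+ 3 * s ^+ 2 * c).
Definition Pcoef23 a s c : F :=
  s * (1 / 25 + 1 / 8 * c + 1 / 4 * c ^+ 2 + 25 / 32 * c ^+ 3
       + 25 / 82 * s ^+ 2 * c + 1 / 20 * a - 1 / 10 * a * c
       + 5 / 16 * a * c ^+ 2 - 5 / 8 * a * c ^+ 3 + 5 / 41 * a * s ^+ 2
       + 10 / 41 * a * s ^+ 2 * c - 125 / 164 * a * s ^+ 2 * c ^+ 2
       + 4 / 41 * a ^+ 2 * s ^+ 2 - 25 / 82 * a ^+ 2 * s ^+ 2 * c
       - 25 / 41 * a ^+ 2 * s ^+ 2 * c ^+ 2 - 10 / 41 * a ^+ 3 * s ^+ 2 * c).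

Definition Q_diag a s c t : F :=
  1 - 5 * t
  + (909 / 100 - 41 / 16 * c ^+ 2 - 2306 / 1681 * s ^+ 2 - 1000 / 1681 * a * s ^+ 2
    - 2081 / 1681 * a ^+ 2 * s ^+ 2) * t ^+ 2
  + (- 1487 / 200 + (12 * 1000 + 219) / 1600 * c ^+ 2 + 6754 / 1681 * s ^+ 2
    + 3410 / 1681 * a * s ^+ 2 + 9 / 20 * a * s ^+ 2 * c
    + (23 * 1000 + 947) / 6724 * a ^+ 2 * s ^+ 2 - a ^+ 2 * s ^+ 4) * t ^+ 3
  + (4347 / 1600 - (10 * 1000 + 313) / 1600 * c ^+ 2 + 25 / 16 * c ^+ 4
    - (290 * 1000 + 939) / (84 * 1000 + 50) * s ^+ 2 + 25 / 41 * s ^+ 2 * c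
    + 25 / 16 * s ^+ 2 * c ^+ 2 + 625 / 1681 * s ^+ 4 - 3040 / 1681 * a * s ^+ 2
    - 297 / 410 * a * s ^+ 2 * c + 1000 / 1681 * a * s ^+ 4
    - (80 * 1000 + 341) / (26 * 1000 + 896) * a ^+ 2 * s ^+ 2
    - 25 / 41 * a ^+ 2 * s ^+ 2 * c + a ^+ 2 * s ^+ 2 * c ^+ 2
    + 107 / 41 * a ^+ 2 * s ^+ 4 + 1000 / 1681 * a ^+ 3 * s ^+ 4
    + 400 / 1681 * a ^+ 4 * s ^+ 4) * t ^+ 4
  + (- 567 / 1600 + 9657 / 6400 * c ^+ 2 - 25 / 16 * c ^+ 4
    + (72 * 1000 + 639) / (84 * 1000 + 50) * s ^+ 2 - 21 / 41 * s ^+ 2 * c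
    - 75 / 64 * s ^+ 2 * c ^+ 2 - 525 / 1681 * s ^+ 4 + 630 / 1681 * a * s ^+ 2
    + 531 / 3280 * a * s ^+ 2 * c - 5 / 8 * a * s ^+ 2 * c ^+ 2 - 840 / 1681 * a * s ^+ 4
    - 125 / 164 * a * s ^+ 4 * c
    + (19 * 1000 + 161) / (26 * 1000 + 896) * a ^+ 2 * s ^+ 2
    + 75 / 164 * a ^+ 2 * s ^+ 2 * c - 3 / 4 * a ^+ 2 * s ^+ 2 * c ^+ 2
    - 9943 / 6724 * a ^+ 2 * s ^+ 4 + 625 / 1681 * a ^+ 2 * s ^+ 6
    - 750 / 1681 * a ^+ 3 * s ^+ 4 + 20 / 41 * a ^+ 3 * s ^+ 4 * c
    + 1000 / 1681 * a ^+ 3 * s ^+ 6 - 300 / 1681 * a ^+ 4 * s ^+ 4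
    + 400 / 1681 * a ^+ 4 * s ^+ 6) * t ^+ 5.

Definition sym_monomial i j x y : F := x ^+ i * y ^+ j + x ^+ j * y ^+ i.

Lemma det_Q_Centry a s c x y :
  det_laplace 5 (Q_entries 5 (Centry a s c) x y) = Q_diag a s c (x * y)
  + sym_monomial 2 3 x y * Qcoef23 a s c + sym_monomial 3 4 x y * Qcoef34 a s c
  + sym_monomial 3 5 x y * Qcoef35 a s c + sym_monomial 4 5 x y * Qcoef45 a s c.
Proof.
rewrite /Q_entries /P_entries /= /Q_diag /sym_monomial.
by rewrite /Qcoef23 /Qcoef34 /Qcoef35 /Qcoef45; field.
Qed.

Lemma det_Q_Centry_xy a s c x y :
    Qcoef23 a s c = 0 -> Qcoef34 a s c = 0 -> Qcoef35 a s c = 0 -> Qcoef45 a s c = 0 ->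
  det_laplace 5 (Q_entries 5 (Centry a s c) x y) =
  det_laplace 5 (Q_entries 5 (Centry a s c) (x * y) 1).
Proof.
by move=> q23 q34 q35 q45; rewrite !det_Q_Centry q23 q34 q35 q45 !mulr0 !addr0 mulr1.
Qed.

Lemma det_P_Centry a s c x : x != 0 ->
  det_laplace 5 (P_entries (Centry a s c) x x^-1) =
  det_laplace 5 (P_entries (Centry a s c) 1 1)
  + (x + x^-1 - 2) * (Qcoef23 a s c + Pcoef23 a s c).
Proof. by move=> x0; rewrite /P_entries /= /Qcoef23 /Pcoef23; field. Qed.

Lemma det_P_Centry_neq a s c x :
    x != 0 -> x + x^-1 != 2 -> Qcoef23 a s c + Pcoef23 a s c != 0 ->
  det_laplace 5 (P_entries (Centry a s c) x x^-1) !=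
  det_laplace 5 (P_entries (Centry a s c) 1 1).
Proof.
move=> x0 x2 coef0; rewrite det_P_Centry // -[X in _ != X]addr0 (inj_eq (addrI _)).
by rewrite mulf_neq0 // subr_eq0.
Qed.

End CalphaSymbolic.

Section CalphaRmorph.
Variables (F K : numFieldType) (f : {rmorphism F -> K}).

Lemma Centry_rmorph a s c i j :
  f (Centry a s c i j) = Centry (f a) (f s) (f c) i j.
Proof.
by case: i => [|[|[|[|[|i]]]]]; case: j => [|[|[|[|[|j]]]]]; rewrite /=; field.
Qed.

Lemma coefs_rmorph a s c :
  [/\ f (Qcoef23 a s c) = Qcoef23 (f a) (f s) (f c),
      f (Qcoef34 a s c) = Qcoef34 (f a) (f s) (f c),
      f (Qcoef35 a s c) = Qcoef35 (f a) (f s) (f c),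
      f (Qcoef45 a s c) = Qcoef45 (f a) (f s) (f c)
    & f (Pcoef23 a s c) = Pcoef23 (f a) (f s) (f c)].
Proof.
by rewrite /Qcoef23 /Qcoef34 /Qcoef35 /Qcoef45 /Pcoef23; split; field.
Qed.

End CalphaRmorph.

Lemma Phi_has_root (R : realType) :
  exists a : R, Phi a = 0 /\ - (55 / 100) < a < - (54 / 100).
Proof.
pose p : {poly R} := (n3 R 24 182 784)%:P * 'X^5 - (n3 R 927 166 375)%:P * 'X^4
  + (n3 R 274 15 368)%:P * 'X^3 + (n3 R 10 740 240)%:P * 'X^2
  - (n3 R 318 470 912)%:P * 'X - (n3 R 47 232 0)%:P.
have pE x : p.[x] = Phi x.
  by rewrite /p !(hornerD, hornerN, hornerCM, hornerXn, hornerX, hornerC).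
have Phi_lo : Phi (- (55 / 100)) < 0 :> R by rewrite /Phi /n3; lra.
have Phi_hi : 0 < Phi (- (54 / 100)) :> R by rewrite /Phi /n3; lra.
have ab : - (55 / 100) <= - (54 / 100) :> R by lra.
have sign : p.[- (55 / 100)] <= 0 <= p.[- (54 / 100)] by rewrite !pE !ltW.
have [a /andP [a_lo a_hi]] := poly_ivt ab sign; rewrite /root pE => /eqP Phi_a.
exists a; split; rewrite // !lt_neqAle a_lo a_hi !andbT.
apply/andP; split; apply/eqP => a_eq.
  by move: Phi_lo; rewrite a_eq Phi_a ltxx.
by move: Phi_hi; rewrite -a_eq Phi_a ltxx.
Qed.

Section Calpha.
Variables (R : realType) (a s : R).
Hypothesis Phi_a : Phi a = 0.
Hypothesis a_range : - (55 / 100) < a < - (54 / 100).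
Hypothesis s_sqr : s ^+ 2 = 36 * (4 * a + 5) / (1025 * a * (5 * a - 4)).

Lemma a_neq0 : a != 0.
Proof. by case/andP: a_range => ? ?; apply: ltr0_neq0; lra. Qed.

Lemma five_a_sub4_neq0 : 5 * a - 4 != 0.
Proof. by case/andP: a_range => ? ?; apply: ltr0_neq0; lra. Qed.

Lemma Qcoefs_Calpha_eq0 : [/\ Qcoef23 a s (cc a) = 0, Qcoef34 a s (cc a) = 0,
  Qcoef35 a s (cc a) = 0 & Qcoef45 a s (cc a) = 0].
Proof.
have a0 := a_neq0; have a5 := five_a_sub4_neq0.
rewrite /Qcoef23 /Qcoef34 /Qcoef35 /Qcoef45 /cc s_sqr.
split; try by field; rewrite ?[a * 5]mulrC ?a0 ?a5.
(* This is where the quintic Phi comes from. *)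
apply: (@eq_trans _ _ (- s * Phi a / (n3 R 1130 304 400 * a * (5 * a - 4) ^+ 2))).
  by rewrite /Phi /n3; field; rewrite ?[a * 5]mulrC ?a0 ?a5.
by rewrite Phi_a mulr0 mul0r.
Qed.

Lemma Pcoefs_CalphaE : Qcoef23 a s (cc a) + Pcoef23 a s (cc a) =
  s * (3125 * a ^+ 3 - 3400 * a ^+ 2 - 560 * a + 1024) / (16400 * (5 * a - 4) ^+ 2).
Proof.
have a0 := a_neq0; have a5 := five_a_sub4_neq0.
apply: (@eq_trans _ _ (s * (3125 * a ^+ 3 - 3400 * a ^+ 2 - 560 * a + 1024)
  / (16400 * (5 * a - 4) ^+ 2) - s * Phi a / (n3 R 1130 304 400 * a * (5 * a - 4) ^+ 2))).
  by rewrite /Qcoef23 /Pcoef23 /cc s_sqr /Phi /n3; field; rewrite ?[a * 5]mulrC ?a0 ?a5.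
by rewrite Phi_a mulr0 mul0r subr0.
Qed.

Lemma s_neq0 : s != 0.
Proof.
case/andP: a_range => a_lo a_hi.
have : 0 < s ^+ 2 by rewrite s_sqr divr_gt0 //; nra.
by apply: contraTneq => ->; rewrite expr0n ltxx.
Qed.

Lemma Pcoefs_Calpha_neq0 : Qcoef23 a s (cc a) + Pcoef23 a s (cc a) != 0.
Proof.
case/andP: a_range => a_lo a_hi; rewrite Pcoefs_CalphaE.
have cubic_neg : 3125 * a ^+ 3 - 3400 * a ^+ 2 - 560 * a + 1024 < 0.
  have a2_ge : 2916 / 10000 <= a ^+ 2 by nra.
  have a3_le : a ^+ 3 <= - (157 / 1000) by nra.
  lra.
rewrite !mulf_neq0 ?invr_eq0 ?mulf_neq0 ?expf_neq0 ?s_neq0 ?five_a_sub4_neq0 //.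
  exact: ltr0_neq0.
by rewrite pnatr_eq0.
Qed.

Lemma Cmx_real_frobenius_le1 : \sum_i \sum_j Cmx_real a s i j ^+ 2 <= 1.
Proof.
have a5 := five_a_sub4_neq0; case/andP: a_range => a_lo a_hi.
set c := cc a; set k := 5 * (4 * a + 5) / 41.
have c_def : c * (205 * (5 * a - 4)) = 32 * (4 * a + 5).
  by rewrite /c /cc; field; rewrite ?[a * 5]mulrC ?a5.
have s_def : s ^+ 2 * (1025 * a * (5 * a - 4)) = 36 * (4 * a + 5).
  by rewrite s_sqr; field; rewrite ?[a * 5]mulrC ?a5 ?a_neq0.
have c_sqr : c ^+ 2 <= 5 / 1000.
  have c_le0 : c <= 0 by nra.
  have c_ge : - (7 / 100) <= c by nra.
  nra.
have s2_le : s ^+ 2 <= 3 / 100 by nra.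
have ks_le : k ^+ 2 * s ^+ 2 <= 12 / 100 * (3 / 100).
  by apply: ler_pM => //; rewrite ?sqr_ge0 // /k; nra.
have as_le : a ^+ 2 * s ^+ 2 <= 31 / 100 * (3 / 100).
  by apply: ler_pM => //; rewrite ?sqr_ge0 //; nra.
have -> : \sum_i \sum_j Cmx_real a s i j ^+ 2 =
    91 / 100 + s ^+ 2 + k ^+ 2 * s ^+ 2 + a ^+ 2 * s ^+ 2 + 41 / 16 * c ^+ 2.
  rewrite !big_ord_recr !big_ord0 /= !mxE /= /ff -/k -/c.
  by field.
lra.
Qed.

Local Open Scope complex_scope.

Lemma Calpha_Centry :
  Calpha a s = \matrix_(i < 5, j < 5) Centry a%:C s%:C (cc a)%:C i j.
Proof. by apply/matrixP => i j; rewrite !mxE -Centry_rmorph. Qed.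

Lemma contraction_Calpha : contraction (Calpha a s).
Proof.
apply: contraction_frobenius.
by rewrite frobenius2_map_real -[1]/(1%:C) lecR Cmx_real_frobenius_le1.
Qed.

Lemma Q_poly_Calpha x y :
  Q_poly (Calpha a s) x y = det_laplace 5 (Q_entries 5 (Centry a%:C s%:C (cc a)%:C) x y).
Proof.
by rewrite /Q_poly /DC adjmx_map_real -/(Calpha a s) Calpha_Centry Q_matrixE det_laplaceE.
Qed.

Lemma P_poly_Calpha x y :
  P_poly (Calpha a s) x y = det_laplace 5 (P_entries (Centry a%:C s%:C (cc a)%:C) x y).
Proof.
by rewrite /P_poly adjmx_map_real -/(Calpha a s) Calpha_Centry P_matrixE det_laplaceE.
Qed.

Lemma Q_poly_Calpha_xy x y : Q_poly (Calpha a s) x y = Q_poly (Calpha a s) (x * y) 1.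
Proof.
have [e23 e34 e35 e45 _] := coefs_rmorph (real_complex R) a s (cc a).
have [q23 q34 q35 q45] := Qcoefs_Calpha_eq0.
rewrite !Q_poly_Calpha; apply: det_Q_Centry_xy.
- by rewrite -e23 q23 rmorph0.
- by rewrite -e34 q34 rmorph0.
- by rewrite -e35 q35 rmorph0.
- by rewrite -e45 q45 rmorph0.
Qed.

Lemma P_poly_Calpha_asym : P_poly (Calpha a s) (- 'i) 'i != P_poly (Calpha a s) 1 1.
Proof.
have i_inv : (- 'i)^-1 = 'i :> R[i] by rewrite invrN invCi opprK.
rewrite -{1}i_inv !P_poly_Calpha; apply: det_P_Centry_neq.
- by rewrite oppr_eq0 neq0Ci.
- by rewrite i_inv addNr eq_sym pnatr_eq0.
- have [<- _ _ _ <-] := coefs_rmorph (real_complex R) a s (cc a).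
  by rewrite -rmorphD fmorph_eq0 Pcoefs_Calpha_neq0.
Qed.

Lemma Q_poly_Calpha_in_Cxy : in_Cxy (Q_poly (Calpha a s)).
Proof. exact/in_Cxy_Q_poly/Q_poly_Calpha_xy. Qed.

Lemma P_poly_Calpha_notin_Cxy : ~ in_Cxy (P_poly (Calpha a s)).
Proof.
have iNi : - 'i * 'i = 1 * 1 :> R[i] by rewrite mulNr -expr2 sqr_i opprK mulr1.
move=> [q Pq]; move: P_poly_Calpha_asym.
by rewrite !Pq iNi eqxx.
Qed.

Lemma Calpha_not_Circularity : ~ Circularity (Calpha a s).
Proof.
move=> circ; have := Circularity_P_poly (pi / 2) 0 circ.
rewrite expiN_pihalf expi_pihalf oppr0 expi0 => P_eq.
by move: P_poly_Calpha_asym; rewrite P_eq eqxx.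
Qed.

End Calpha.

Theorem mainTheorem13 (R : realType) :
  (exists a : R, Phi a = 0 /\ - (55 / 100) < a < - (54 / 100)) /\
  (forall a s : R,
     Phi a = 0 -> - (55 / 100) < a < - (54 / 100) ->
     s ^+ 2 = 36 * (4 * a + 5) / (1025 * a * (5 * a - 4)) ->
     [/\ contraction (Calpha a s),
         in_Cxy (Q_poly (Calpha a s)),
         ~ in_Cxy (P_poly (Calpha a s)),
         (forall (d : nat) (B : 'M[R[i]]_(d, 5)),
            d = \rank (DC (Calpha a s)) -> row_free B ->
            adjmx B *m B = DC (Calpha a s) ->
            Circularity (Amx B (Calpha a s)))
       & ~ Circularity (Calpha a s)]).
Proof.
split; first exact: Phi_has_root.
move=> a s Phi_a a_range s_sqr; split.
- exact: contraction_Calpha a_range s_sqr.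
- exact: Q_poly_Calpha_in_Cxy Phi_a a_range s_sqr.
- exact: P_poly_Calpha_notin_Cxy Phi_a a_range s_sqr.
- move=> d B _ _ BB; apply: Circularity_Amx BB.
  exact: Q_poly_Calpha_in_Cxy Phi_a a_range s_sqr.
- exact: Calpha_not_Circularity Phi_a a_range s_sqr.
Qed.
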